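(* Let $\mathbf{F}=(F_1,\ldots,F_d)$ be a vector of finite simple graphs, each with at most $n$ vertices. If $n \leq n' \leq n''$ are integers, then $P_{\mathbf{F};n'} \supseteq P_{\mathbf{F};n''}$.
   Context: For graphs $F,G$, $t^L(F,G)$ is the number of subgraphs of $G$ (not necessarily induced) isomorphic to $F$, and $t(F,G)=t^L(F,G)/t^L(F,K_{|G|})$ if $|F|\le|G|$ and $t(F,G)=0$ otherwise, where $|H|$ is the number of vertices of $H$ and $K_N$ the complete graph on $N$ vertices. Write $t(\mathbf{F},G)=(t(F_1,G),\ldots,t(F_d,G))\in\mathbb{R}^d$. The polytope from subgraph statistics is $P_{\mathbf{F};n}=\mathrm{conv}\{t(\mathbf{F},G)\mid G \text{ a graph on } n \text{ vertices}\}$. *)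

From HB Require Import structures.
From mathcomp Require Import all_boot all_order all_algebra.
From mathcomp Require Import reals.
Set Implicit Arguments. Unset Strict Implicit. Unset Printing Implicit Defensive.
Import Order.TTheory GRing.Theory Num.Theory.
Local Open Scope ring_scope.

Record graph := Graph { nv : nat; edges : {set {set 'I_nv}} }.

Definition simple (G : graph) : bool := [forall e in edges G, #|e| == 2]%N.

Definition complete (m : nat) : graph :=
  @Graph m [set e : {set 'I_m} | #|e| == 2]%N.

(* t^L(F,G): number of (not necessarily induced) subgraphs (S,E) of G,
   S a vertex subset, E a subset of the edges of G, which are isomorphic to F
   (i.e. there is a bijection f : V(F) -> S mapping E(F) onto E). *)
Definition tL (F G : graph) : nat :=
  #|[set SE : {set 'I_(nv G)} * {set {set 'I_(nv G)}} |
      (SE.2 \subset edges G) &&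
      [exists f : {ffun 'I_(nv F) -> 'I_(nv G)},
         [&& injectiveb f, SE.1 == f @: setT &
             SE.2 == (fun e : {set 'I_(nv F)} => f @: e) @: edges F]]]|.

Definition tdens (R : realType) (F G : graph) : R :=
  if (nv F <= nv G)%N then (tL F G)%:R / (tL F (complete (nv G)))%:R else 0.

Definition tvec (R : realType) (d : nat) (Fs : 'I_d -> graph) (G : graph)
  : 'rV[R]_d := \row_(i < d) tdens R (Fs i) G.

(* Membership in P_{F;n} = conv { t(F,G) | G simple graph on n vertices }:
   x is a convex combination of the points t(F,G), G ranging over the
   (finitely many) simple graphs on vertex set 'I_n. *)
Definition in_polytope (R : realType) (d : nat) (Fs : 'I_d -> graph) (n : nat)
  (x : 'rV[R]_d) : Prop :=
  exists w : {ffun {set {set 'I_n}} -> R},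
    [/\ forall E, 0 <= w E,
        \sum_(E | simple (@Graph n E)) w E = 1 &
        x = \sum_(E | simple (@Graph n E)) w E *: tvec R Fs (@Graph n E)].

(* Each copy of F, |F| <= N, in a graph G on N+1 vertices survives the deletion
   of exactly the N+1-|F| vertices it avoids.  Counting pairs (copy, avoided
   vertex) both in G and in K_(N+1) gives t(F,G) = 1/(N+1) * sum_v t(F,G-v), so
   each generating point of P_(F;N+1) is an average of generating points of
   P_(F;N).  Hence P_(F;N+1) is contained in P_(F;N), and induction on N
   finishes the proof. *)

From mathcomp Require Import all_boot all_order all_algebra.
From mathcomp Require Import reals.
From mathcomp Require Import ring.
Set Implicit Arguments. Unset Strict Implicit. Unset Printing Implicit Defensive.
Import Order.TTheory GRing.Theory Num.Theory.

Local Notation subgraph T := ({set T} * {set {set T}})%type.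

Definition copies (F : graph) (N : nat) (E : {set {set 'I_N}}) :=
  [set SE : subgraph 'I_N |
      (SE.2 \subset E) &&
      [exists f : {ffun 'I_(nv F) -> 'I_N},
         [&& injectiveb f, SE.1 == f @: setT &
             SE.2 == (fun e : {set 'I_(nv F)} => f @: e) @: edges F]]].

Lemma tL_copies F N (E : {set {set 'I_N}}) : tL F (Graph E) = #|copies F E|.
Proof. by []. Qed.

Definition copy_of (F : graph) (T : finType) (f : 'I_(nv F) -> T) : subgraph T :=
  (f @: setT, (fun e : {set 'I_(nv F)} => f @: e) @: edges F).

Definition map_copy (T U : finType) (h : T -> U) (C : subgraph T) : subgraph U :=
  (h @: C.1, (fun e : {set T} => h @: e) @: C.2).

Lemma eq_copy_of F (T : finType) (f g : 'I_(nv F) -> T) :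
  f =1 g -> copy_of f = copy_of g.
Proof.
move=> fg; rewrite /copy_of (eq_imset _ fg); congr (_, _).
by apply: eq_imset => e; apply: eq_imset.
Qed.

Lemma map_copy_of F (T U : finType) (h : T -> U) (f : 'I_(nv F) -> T) :
  map_copy h (copy_of f) = copy_of (h \o f).
Proof.
rewrite /map_copy /copy_of /= -!imset_comp; congr (_, _).
by apply: eq_imset => e; rewrite [RHS]imset_comp.
Qed.

Lemma map_copy_inj (T U : finType) (h : T -> U) :
  injective h -> injective (map_copy h).
Proof.
by move=> hi [S1 E1] [S2 E2] [/(imset_inj hi) -> /(imset_inj (imset_inj hi)) ->].
Qed.

Lemma copiesP F N (E : {set {set 'I_N}}) (C : subgraph 'I_N) :
  reflect (C.2 \subset E /\ exists2 f : 'I_(nv F) -> 'I_N, injective f & C = copy_of f)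
          (C \in copies F E).
Proof.
rewrite inE; apply: (iffP andP) => -[sub hC]; split=> //.
- case/existsP: hC => f /and3P[/injectiveP fi /eqP eS /eqP eE].
  by exists f => //; case: C eS eE {sub} => S E' /= -> ->.
- case: hC => f fi ->; apply/existsP; exists [ffun x => f x]; apply/and3P; split.
  + by apply/injectiveP => x y; rewrite !ffunE => /fi.
  + by apply/eqP/eq_imset => x; rewrite ffunE.
  + by apply/eqP/eq_imset => e; apply/eq_imset => x; rewrite ffunE.
Qed.

Lemma card_copy_vertices F N (E : {set {set 'I_N}}) (C : subgraph 'I_N) :
  C \in copies F E -> #|C.1| = nv F.
Proof. by case/copiesP => _ [f fi ->]; rewrite card_imset // cardsT card_ord. Qed.

(* G - v, the remaining vertices being relabelled along [lift v : 'I_N -> 'I_N.+1]. *)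
Definition del_vertex N (E : {set {set 'I_N.+1}}) (v : 'I_N.+1) : {set {set 'I_N}} :=
  [set e : {set 'I_N} | lift v @: e \in E].

Lemma map_copy_del_vertex F N (E : {set {set 'I_N.+1}}) v (C : subgraph 'I_N) :
  C \in copies F (del_vertex E v) -> map_copy (lift v) C \in copies F E.
Proof.
case/copiesP => sub [f fi Cf]; apply/copiesP; split.
  apply/subsetP => _ /imsetP[e eC ->].
  by have := subsetP sub e eC; rewrite inE.
exists (lift v \o f); first exact: inj_comp (@lift_inj _ v) fi.
by rewrite Cf map_copy_of.
Qed.

Lemma copy_avoiding_vertex F N (E : {set {set 'I_N.+1}}) v (C : subgraph 'I_N.+1) :
  C \in copies F E -> v \notin C.1 ->
  exists2 C', C' \in copies F (del_vertex E v) & C = map_copy (lift v) C'.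
Proof.
case/copiesP => sub [f fi Cf]; rewrite Cf /= => vC.
have lift_f x : exists y, lift v y = f x.
  have : v != f x by apply: contraNneq vC => ->; exact: imset_f.
  by case/unlift_some => y -> _; exists y.
have [g gf] := fin_all_exists lift_f.
have fE : copy_of f = map_copy (lift v) (copy_of g).
  by rewrite map_copy_of; apply: eq_copy_of => x; rewrite /= gf.
exists (copy_of g); last by rewrite fE.
apply/copiesP; split.
  apply/subsetP => e eC; rewrite inE; apply: (subsetP sub).
  by rewrite Cf fE; exact: imset_f.
by exists g => // x y /(congr1 (lift v)); rewrite !gf => /fi.
Qed.

Lemma card_copies_del_vertex F N (E : {set {set 'I_N.+1}}) v :
  #|copies F (del_vertex E v)| = #|[set C in copies F E | v \notin C.1]|.
Proof.
rewrite -(card_imset _ (map_copy_inj (@lift_inj _ v))); apply: eq_card => C.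
apply/imsetP/setIdP => [[C' cC' ->] | [cC vC]].
  split; first exact: map_copy_del_vertex.
  by apply/imsetP => -[y _ /eqP]; rewrite (negbTE (neq_lift _ _)).
by case: (copy_avoiding_vertex cC vC) => C' ? ->; exists C'.
Qed.

Lemma sum_card_copies_del_vertex F N (E : {set {set 'I_N.+1}}) :
  (\sum_v #|copies F (del_vertex E v)| = #|copies F E| * (N.+1 - nv F))%N.
Proof.
have avoid v : #|[set C in copies F E | v \notin C.1]| =
    (\sum_(C in copies F E) (v \notin C.1))%N.
  by rewrite -sum1dep_card big_mkcondr; apply: eq_bigr => C _; case: (_ \notin _).
under eq_bigr => v _ do rewrite card_copies_del_vertex avoid.
rewrite exchange_big -sum_nat_const; apply: eq_bigr => C cC /=.
have partition_C := cardsC C.1; rewrite card_ord in partition_C.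
rewrite -(card_copy_vertices cC) -[X in (X - _)%N]partition_C addKn.
rewrite -sum1dep_card [RHS]big_mkcond /=.
by apply: eq_bigr => v _; rewrite ?inE; case: (v \notin _).
Qed.

Lemma del_vertex_complete N (v : 'I_N.+1) :
  del_vertex (edges (complete N.+1)) v = edges (complete N).
Proof. by apply/setP => e; rewrite !inE card_imset //; exact: lift_inj. Qed.

Lemma simple_del_vertex N (E : {set {set 'I_N.+1}}) v :
  simple (Graph E) -> simple (Graph (del_vertex E v)).
Proof.
move=> /forall_inP simpleE; apply/forall_inP => e; rewrite inE => /simpleE.
by rewrite card_imset //; exact: lift_inj.
Qed.

Lemma copies_complete_gt0 F N : simple F -> (nv F <= N)%N ->
  (0 < #|copies F (edges (complete N))|)%N.
Proof.
move=> /forall_inP simpleF leFN; pose f := widen_ord leFN.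
have fi : injective f by move=> x y [] /val_inj.
apply/card_gt0P; exists (copy_of f); apply/copiesP; split; last by exists f.
by apply/subsetP => _ /imsetP[e eF ->]; rewrite inE card_imset //; exact: simpleF.
Qed.

Local Open Scope ring_scope.

Lemma tdens_avg_del_vertex (R : realType) F N (E : {set {set 'I_N.+1}}) :
  simple F -> (nv F <= N)%N ->
  tdens R F (Graph E) = N.+1%:R^-1 * \sum_v tdens R F (Graph (del_vertex E v)).
Proof.
move=> simpleF leFN; rewrite /tdens /= (leqW leFN) leFN.
rewrite !tL_copies -mulr_suml -natr_sum sum_card_copies_del_vertex.
set b := #|copies F (edges (complete N))|.
set c := #|copies F (edges (complete N.+1))|; set k := (N.+1 - nv F)%N.
(* the same double counting in K_(N+1), all of whose vertex deletions are K_N *)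
have bc : (N.+1 * b = c * k)%N.
  rewrite -sum_card_copies_del_vertex.
  under eq_bigr => v _ do rewrite del_vertex_complete.
  by rewrite sum_nat_const card_ord.
have c_gt0 : (0 < c)%N by apply: copies_complete_gt0; rewrite // leqW.
have k_gt0 : (0 < k)%N by rewrite subn_gt0 ltnS.
have -> : b%:R = c%:R * k%:R / N.+1%:R :> R.
  by rewrite -natrM -bc natrM mulrC mulKf // pnatr_eq0.
rewrite natrM; field.
by rewrite -(natrD _ 1 N) !pnatr_eq0 -!lt0n c_gt0 k_gt0.
Qed.

Lemma tvec_avg_del_vertex (R : realType) d (Fs : 'I_d -> graph) N
    (E : {set {set 'I_N.+1}}) :
  (forall i, simple (Fs i)) -> (forall i, (nv (Fs i) <= N)%N) ->
  tvec R Fs (Graph E) = N.+1%:R^-1 *: \sum_v tvec R Fs (Graph (del_vertex E v)).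
Proof.
move=> simpleFs leFsN; apply/rowP => i.
rewrite !mxE summxE (tdens_avg_del_vertex _ _ (simpleFs i) (leFsN i)).
by congr (_ * _); apply: eq_bigr => v _; rewrite mxE.
Qed.

Section ConvexCombination.
Variables (R : numFieldType) (V : lmodType R).

Definition is_convex_comb (J : finType) (Q : pred J) (q : J -> V) (x : V) : Prop :=
  exists w : {ffun J -> R},
    [/\ forall j, 0 <= w j, \sum_(j | Q j) w j = 1 & x = \sum_(j | Q j) w j *: q j].

Lemma convex_comb_point (J : finType) (Q : pred J) (q : J -> V) j :
  Q j -> is_convex_comb Q q (q j).
Proof.
move=> Qj; exists [ffun i => (i == j)%:R]; split.
- by move=> i; rewrite ffunE ler0n.
- rewrite (bigD1 j) //= ffunE eqxx big1 ?addr0 // => i /andP[_ /negbTE].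
  by rewrite ffunE => ->.
- rewrite (bigD1 j) //= ffunE eqxx scale1r big1 ?addr0 // => i /andP[_ /negbTE].
  by rewrite ffunE => ->; rewrite scale0r.
Qed.

Lemma convex_comb_uniform (T : finType) (p : T -> V) :
  (0 < #|T|)%N -> is_convex_comb predT p (#|T|%:R^-1 *: \sum_t p t).
Proof.
move=> T_gt0; exists [ffun=> #|T|%:R^-1]; split.
- by move=> t; rewrite ffunE invr_ge0 ler0n.
- under eq_bigr do rewrite ffunE.
  by rewrite sumr_const -[_^-1 *+ _]mulr_natl mulfV // pnatr_eq0 -lt0n.
- by rewrite scaler_sumr; apply: eq_bigr => t _; rewrite ffunE.
Qed.

Lemma convex_comb_trans (I J : finType) (P : pred I) (Q : pred J)
    (p : I -> V) (q : J -> V) x :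
  (forall i, P i -> is_convex_comb Q q (p i)) ->
  is_convex_comb P p x -> is_convex_comb Q q x.
Proof.
move=> pq [w [w_ge0 w_sum1 ->]].
have /fin_all_exists[u uP] : forall i, exists u : {ffun J -> R}, P i ->
    [/\ forall j, 0 <= u j, \sum_(j | Q j) u j = 1 & p i = \sum_(j | Q j) u j *: q j].
  move=> i; case: (boolP (P i)) => [/pq[u uP] | notPi]; first by exists u.
  by exists 0 => Pi; case/negP: notPi.
exists [ffun j => \sum_(i | P i) w i * u i j]; split.
- by move=> j; rewrite ffunE sumr_ge0 // => i /uP[u_ge0 _ _]; rewrite mulr_ge0.
- under eq_bigr do rewrite ffunE.
  rewrite exchange_big /= -w_sum1; apply: eq_bigr => i /uP[_ u_sum1 _].
  by rewrite -mulr_sumr u_sum1 mulr1.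
- under [RHS]eq_bigr do rewrite ffunE scaler_suml.
  rewrite exchange_big /=; apply: eq_bigr => i /uP[_ _ ->].
  by rewrite scaler_sumr; apply: eq_bigr => j _; rewrite scalerA.
Qed.

Lemma convex_comb_avg (J : finType) (Q : pred J) (q : J -> V)
    (T : finType) (f : T -> J) :
  (0 < #|T|)%N -> (forall t, Q (f t)) ->
  is_convex_comb Q q (#|T|%:R^-1 *: \sum_t q (f t)).
Proof.
move=> T_gt0 Qf; apply: convex_comb_trans (convex_comb_uniform (q \o f) T_gt0).
by move=> t _; exact: convex_comb_point.
Qed.

End ConvexCombination.

Lemma in_polytope_S (R : realType) d (Fs : 'I_d -> graph) N (x : 'rV[R]_d) :
  (forall i, simple (Fs i)) -> (forall i, (nv (Fs i) <= N)%N) ->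
  in_polytope Fs N.+1 x -> in_polytope Fs N x.
Proof.
move=> simpleFs leFsN; apply: convex_comb_trans => E simpleE.
rewrite (tvec_avg_del_vertex R E simpleFs leFsN) -[in N.+1%:R](card_ord N.+1).
by apply: convex_comb_avg => [|v]; [rewrite card_ord | exact: simple_del_vertex].
Qed.

Lemma in_polytope_antimono (R : realType) d (Fs : 'I_d -> graph) N M (x : 'rV[R]_d) :
  (forall i, simple (Fs i)) -> (forall i, (nv (Fs i) <= N)%N) -> (N <= M)%N ->
  in_polytope Fs M x -> in_polytope Fs N x.
Proof.
move=> simpleFs leFsN /subnK <-; elim: (M - N)%N => [// | k IHk] Hx.
apply/IHk/(in_polytope_S simpleFs _ Hx) => i.
exact: leq_trans (leFsN i) (leq_addl k N).
Qed.

Theorem proposition2p7 (R : realType) (d : nat) (Fs : 'I_d -> graph)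
    (n n' n'' : nat) :
  (forall i, simple (Fs i)) ->
  (forall i, (nv (Fs i) <= n)%N) ->
  (n <= n')%N -> (n' <= n'')%N ->
  forall x : 'rV[R]_d, in_polytope Fs n'' x -> in_polytope Fs n' x.
Proof.
move=> simpleFs leFsn lenn' len'n'' x; apply: in_polytope_antimono len'n'' => // i.
exact: leq_trans (leFsn i) lenn'.
Qed.
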